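(* In the setting described in the context, let $X,Y$ be graphs in $\Gamma$. Every morphism $h:GX\to GY$ of $R\mathcal{C}$ can be uniquely represented as right multiplication by an element $a\in A$ (i.e. $(x)h=xa$ for $x\in GX\subseteq M$), and $a$ is of the form $a=\sum_{i\in I}\sigma_ik_i$ where $I$ is finite, the $k_i$ are nonzero elements of $R$, and the $\sigma_i:X\to Y$ are distinct morphisms of $\Gamma$.
   Context: $R$ is a commutative ring with $1\ne0$; $\kappa$ a cardinal of uncountable cofinality. Graphs: sets with a binary relation; morphisms: relation-preserving maps; maps act on the right ($\sigma\tau$ = first $\sigma$ then $\tau$). $R\mathcal{C}$ is a category such that: it is an $R$-category (Hom-sets, written $\mathrm{Hom}_R$, are $R$-modules, composition bilinear); preabelian; has arbitrary direct sums; is concrete with underlying-set functor preserving directed colimits and monomorphisms injective on underlying sets. $\Gamma$ is a full subcategory of graphs with one representative per isomorphism class of graphs of cardinality $<\kappa$. $A$ is the free $R$-module on the morphisms of $\Gamma$ plus $1$, an $R$-algebra via composition (product $0$ if not composable), $R$ central. $M\in R\mathcal{C}$ satisfies: (B1) $A\cong\mathrm{Hom}_R(M,M)$ (so $M$ is a right $A$-object); (B2) $A\subseteq M$ as $A$-objects and $A\varphi=A\cap M\varphi$ for every morphism $\varphi$ of $\Gamma$; (B3) for a monomorphism $\varphi:C\to D$ in $\Gamma$, $M\,\mathrm{id}_C\subseteq M\xrightarrow{\varphi}M$ is a monomorphism. For $X\in\Gamma$, $GX=M\,\mathrm{id}_X$, a direct summand of $M$ since $\mathrm{id}_X$ is an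 idempotent of $A$. *)

From HB Require Import structures.
From mathcomp Require Import all_boot all_algebra.
From Stdlib Require List Permutation.

Set Implicit Arguments.
Unset Strict Implicit.
Unset Printing Implicit Defensive.
Import GRing.Theory.
Local Open Scope ring_scope.

(* [comp f g] means "first f, then g".                                *)
Record rcat (R : comNzRingType) := RCat {
  obj : Type;
  arr : obj -> obj -> lmodType R;
  idm : forall X, arr X X;
  comp : forall X Y Z, arr X Y -> arr Y Z -> arr X Z
}.
Arguments obj {R} r.
Arguments arr {R} r X Y.
Arguments idm {R r} X.
Arguments comp {R r X Y Z}.

Section RCatDefs.
Variables (R : comNzRingType) (C : rcat R).

Definition is_rcategory : Prop :=
  (forall X Y (f : arr C X Y), comp (idm X) f = f /\ comp f (idm Y) = f) /\
  (forall X Y Z W (f : arr C X Y) (g : arr C Y Z) (h : arr C Z W),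
      comp (comp f g) h = comp f (comp g h)) /\
  (forall X Y Z (f : arr C X Y) (g1 g2 : arr C Y Z) (k : R),
      comp f (k *: g1 + g2) = k *: comp f g1 + comp f g2) /\
  (forall X Y Z (f1 f2 : arr C X Y) (g : arr C Y Z) (k : R),
      comp (k *: f1 + f2) g = k *: comp f1 g + comp f2 g).

Definition is_kernel X Y (f : arr C X Y) K (k : arr C K X) : Prop :=
  comp k f = 0 /\
  forall W (g : arr C W X), comp g f = 0 -> exists! u : arr C W K, comp u k = g.

Definition is_cokernel X Y (f : arr C X Y) Q (q : arr C Y Q) : Prop :=
  comp f q = 0 /\
  forall W (g : arr C Y W), comp f g = 0 -> exists! u : arr C Q W, comp q u = g.

(* arbitrary direct sums (coproducts; in an additive category these are the
   direct sums; the empty one is a zero object, finite ones are biproducts) *)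
Definition has_direct_sums : Prop :=
  forall (I : Type) (F : I -> obj C),
    exists (S : obj C) (inj : forall i, arr C (F i) S),
      forall Z (g : forall i, arr C (F i) Z),
        exists! u : arr C S Z, forall i, comp (inj i) u = g i.

Definition preabelian : Prop :=
  is_rcategory /\ has_direct_sums /\
  forall X Y (f : arr C X Y),
    (exists K (k : arr C K X), is_kernel f k) /\
    (exists Q (q : arr C Y Q), is_cokernel f q).

Definition mono X Y (f : arr C X Y) : Prop :=
  forall W (g1 g2 : arr C W X), comp g1 f = comp g2 f -> g1 = g2.

Variables (U : obj C -> Type) (Umap : forall X Y, arr C X Y -> U X -> U Y).
Arguments Umap {X Y}.

Definition concrete : Prop :=
  (forall X (x : U X), Umap (idm X) x = x) /\
  (forall X Y Z (f : arr C X Y) (g : arr C Y Z) (x : U X),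
      Umap (comp f g) x = Umap g (Umap f x)) /\
  (forall X Y (f g : arr C X Y), (forall x, Umap f x = Umap g x) -> f = g).

Definition monos_injective : Prop :=
  forall X Y (f : arr C X Y), mono f -> forall x y, Umap f x = Umap f y -> x = y.

Definition directed (D : Type) (le : D -> D -> Prop) : Prop :=
  inhabited D /\ (forall i, le i i) /\
  (forall i j k, le i j -> le j k -> le i k) /\
  (forall i j, exists k, le i k /\ le j k).

Definition diagram D (le : D -> D -> Prop) (F : D -> obj C)
  (Fm : forall i j, le i j -> arr C (F i) (F j)) : Prop :=
  (forall i (p : le i i), Fm i i p = idm (F i)) /\
  (forall i j k (p : le i j) (q : le j k) (r : le i k),
      comp (Fm i j p) (Fm j k q) = Fm i k r).

Definition cocone D (le : D -> D -> Prop) (F : D -> obj C)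
  (Fm : forall i j, le i j -> arr C (F i) (F j)) L (c : forall i, arr C (F i) L) :=
  forall i j (p : le i j), comp (Fm i j p) (c j) = c i.

Definition is_colimit D (le : D -> D -> Prop) (F : D -> obj C)
  (Fm : forall i j, le i j -> arr C (F i) (F j)) L (c : forall i, arr C (F i) L) :=
  cocone Fm c /\
  forall Z (c' : forall i, arr C (F i) Z), cocone Fm c' ->
    exists! u : arr C L Z, forall i, comp (c i) u = c' i.

Definition preserves_directed_colimits : Prop :=
  forall D (le : D -> D -> Prop) (F : D -> obj C)
    (Fm : forall i j, le i j -> arr C (F i) (F j)) L (c : forall i, arr C (F i) L),
    directed le -> diagram Fm -> is_colimit Fm c ->
    (forall z : U L, exists i (x : U (F i)), z = Umap (c i) x) /\
    (forall i j (x : U (F i)) (y : U (F j)), Umap (c i) x = Umap (c j) y ->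
       exists k (p : le i k) (q : le j k), Umap (Fm i k p) x = Umap (Fm j k q) y).

End RCatDefs.

Record graph := Graph { vert : Type; edge : vert -> vert -> Prop }.

Definition ghom (G H : graph) :=
  {f : vert G -> vert H | forall x y, edge x y -> edge (f x) (f y)}.

Definition gcomp (G H K : graph) (f : ghom G H) (g : ghom H K) : ghom G K.
Proof.
exists (fun x => proj1_sig g (proj1_sig f x)).
by move=> x y e; apply: (proj2_sig g); apply: (proj2_sig f).
Defined.

Definition gid (G : graph) : ghom G G :=
  exist (fun f : vert G -> vert G => forall x y, edge x y -> edge (f x) (f y))
    (fun x => x) (fun x y e => e).

Definition graph_iso (G H : graph) : Prop :=
  exists f : vert G -> vert H, bijective f /\ forall x y, edge x y <-> edge (f x) (f y).

(* Cardinals: a cardinal kappa is represented by a type K.            *)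
Definition card_lt (T K : Type) : Prop :=
  (exists f : T -> K, injective f) /\ ~ (exists g : K -> T, injective g).

Definition uncountable_cofinality (K : Type) : Prop :=
  (exists f : nat -> K, injective f) /\
  forall T : nat -> Type, (forall n, card_lt (T n) K) -> card_lt {n : nat & T n} K.

(* Gamma: one representative per isomorphism class of graphs of size < kappa *)
Definition skeleton (K GI : Type) (gr : GI -> graph) : Prop :=
  (forall i, card_lt (vert (gr i)) K) /\
  (forall i j, graph_iso (gr i) (gr j) -> i = j) /\
  (forall G : graph, card_lt (vert G) K -> exists i, graph_iso G (gr i)).

Definition mor (GI : Type) (gr : GI -> graph) (X Y : GI) := ghom (gr X) (gr Y).

Definition gmono (GI : Type) (gr : GI -> graph) (X Y : GI) (phi : mor gr X Y) : Prop :=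
  forall Z (g1 g2 : mor gr Z X), gcomp g1 phi = gcomp g2 phi -> g1 = g2.

(* basis of A: the morphisms of Gamma, plus 1 (= None) *)
Definition Abasis (GI : Type) (gr : GI -> graph) :=
  option {XY : GI * GI & mor gr XY.1 XY.2}.

Section AlgebraDefs.
Variables (R : comNzRingType) (C : rcat R) (GI : Type) (gr : GI -> graph) (M : obj C).
(* theta s = the endomorphism of M by which the basis element s of A acts *)
Variable theta : forall X Y, mor gr X Y -> arr C M M.

Definition thetaB (b : Abasis gr) : arr C M M :=
  match b with
  | None => idm M
  | Some (existT XY s) => theta s
  end.

Definition lincombB (l : seq (R * Abasis gr)) : arr C M M :=
  foldr (fun p acc => p.1 *: thetaB p.2 + acc) 0 l.

(* (B1): A ~= Hom_R(M,M) as R-algebras, via the linear extension of theta;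
   composition in A (sigma tau = first sigma then tau, 0 if not composable)
   corresponds to composition of endomorphisms (right action) *)
Definition B1 : Prop :=
  (forall X Y Z (s : mor gr X Y) (t : mor gr Y Z),
      comp (theta s) (theta t) = theta (gcomp s t)) /\
  (forall X Y Y' Z (s : mor gr X Y) (t : mor gr Y' Z),
      Y <> Y' -> comp (theta s) (theta t) = 0) /\
  (forall e : arr C M M, exists l : seq (R * Abasis gr), e = lincombB l) /\
  (forall l : seq (R * Abasis gr), List.NoDup (map snd l) -> lincombB l = 0 ->
      forall p, List.In p l -> p.1 = 0).

Variables (U : obj C -> Type) (Umap : forall X Y, arr C X Y -> U X -> U Y).
Arguments Umap {X Y}.

(* (B2): A (identified with End(M) via B1) sits inside M compatibly with
   the right A-action, and A phi = A cap M phi *)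
Definition B2 (j : arr C M M -> U M) : Prop :=
  (forall e f, j e = j f -> e = f) /\
  (forall e f : arr C M M, j (comp e f) = Umap f (j e)) /\
  (forall X Y (phi : mor gr X Y) (m : U M),
     (exists e, m = j (comp e (theta phi))) <->
     ((exists e, m = j e) /\ (exists y, m = Umap (theta phi) y))).

(* (B3): for phi : C -> D mono in Gamma, M id_C >-> M --phi--> M is mono *)
Definition B3 : Prop :=
  forall X Y (phi : mor gr X Y), gmono phi ->
  forall (G : obj C) (i : arr C G M) (p : arr C M G),
    comp i p = idm G -> comp p i = theta (gid (gr X)) ->
    mono (comp i (theta phi)).

Definition lincomb X Y (l : seq (R * mor gr X Y)) : arr C M M :=
  foldr (fun p acc => p.1 *: theta p.2 + acc) 0 l.

End AlgebraDefs.

(* G X = M id_X, given as a splitting (inclusion i, projection p) of the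
   idempotent endomorphism theta(id_X) of M *)
Definition splits (R : comNzRingType) (C : rcat R) (M G : obj C)
  (i : arr C G M) (p : arr C M G) (e : arr C M M) : Prop :=
  comp i p = idm G /\ comp p i = e.

(* The endomorphism [e = pX h iY] of M lies in the corner [id_X A id_Y]. By (B1) it is an
   R-combination of basis elements of A, and sandwiching a basis element between [id_X] and
   [id_Y] gives either 0 or a morphism [X -> Y] of Gamma; merging repeated terms and dropping
   zero coefficients yields the required sum. Any other such sum representing [h] equals [e]
   after cancelling the split mono [iX], so by the linear independence part of (B1) it has the
   same coefficients, hence is a permutation of the first one. *)
From Pilot Require Import Defs.
From HB Require Import structures.
From mathcomp Require Import all_boot all_algebra.
From Stdlib Require List Permutation.
From Stdlib Require Import ClassicalEpsilon ProofIrrelevance.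
From Stdlib Require Eqdep.
Local Open Scope ring_scope.
Import GRing.Theory.
Set Implicit Arguments.
Unset Strict Implicit.
Local Notation comp := Defs.comp.

(* The index types (morphism sets of Gamma) carry no decidable equality, so formal sums
   are lists of (coefficient, index) pairs compared classically. *)
Definition classical_eq_dec (T : Type) (x y : T) : {x = y} + {x <> y} :=
  excluded_middle_informative (x = y).

Section FormalSums.
Variables (R : comNzRingType) (T : Type).

Definition lcomb (V : lmodType R) (f : T -> V) (l : seq (R * T)) : V :=
  foldr (fun p acc => p.1 *: f p.2 + acc) 0 l.

Definition coef (l : seq (R * T)) (t : T) : R :=
  foldr (fun p acc => (if classical_eq_dec p.2 t then p.1 else 0) + acc) 0 l.

Definition independent (V : lmodType R) (f : T -> V) : Prop :=
  forall l, List.NoDup (map snd l) -> lcomb f l = 0 -> forall p, List.In p l -> p.1 = 0.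

Fixpoint add_term (p : R * T) (l : seq (R * T)) : seq (R * T) :=
  match l with
  | [::] => [:: p]
  | q :: r => if classical_eq_dec q.2 p.2 then (p.1 + q.1, q.2) :: r else q :: add_term p r
  end.

Definition collect (l : seq (R * T)) : seq (R * T) := foldr add_term [::] l.

Definition reduce (l : seq (R * T)) : seq (R * T) :=
  filter (fun p => p.1 != 0) (collect l).

Lemma lcomb_cat (V : lmodType R) (f : T -> V) l1 l2 :
  lcomb f (l1 ++ l2) = lcomb f l1 + lcomb f l2.
Proof. by elim: l1 => [|p r IH] /=; rewrite ?add0r // IH addrA. Qed.

Lemma coef_cat l1 l2 t : coef (l1 ++ l2) t = coef l1 t + coef l2 t.
Proof. by elim: l1 => [|p r IH] /=; rewrite ?add0r // IH addrA. Qed.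

Lemma lcomb_add_term (V : lmodType R) (f : T -> V) p l :
  lcomb f (add_term p l) = p.1 *: f p.2 + lcomb f l.
Proof.
elim: l => [|q r IH] //=.
case: classical_eq_dec => [qp|_] /=; first by rewrite qp scalerDl addrA.
by rewrite IH addrCA.
Qed.

Lemma coef_add_term p l t :
  coef (add_term p l) t = (if classical_eq_dec p.2 t then p.1 else 0) + coef l t.
Proof.
elim: l => [|q r IH] //=.
case: (classical_eq_dec q.2 p.2) => [qp|_] /=; last by rewrite IH addrCA.
by rewrite qp; case: (classical_eq_dec p.2 t) => ? /=; rewrite ?add0r ?addrA.
Qed.

Lemma In_add_term p l t :
  List.In t (map snd (add_term p l)) -> t = p.2 \/ List.In t (map snd l).
Proof.
elim: l => [|q r IH] /=; first by case=> [<-|[]]; left.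
case: classical_eq_dec => [_|_] /=; first by case; [right; left | right; right].
case=> [<-|/IH [->|in_r]]; by [right; left | left | right; right].
Qed.

Lemma NoDup_add_term p l : List.NoDup (map snd l) -> List.NoDup (map snd (add_term p l)).
Proof.
elim: l => [|q r IH] /=; first by repeat constructor.
move=> /List.NoDup_cons_iff [q_notin_r Nr].
case: (classical_eq_dec q.2 p.2) => [_|neq_qp] /=; first exact: List.NoDup_cons.
apply: List.NoDup_cons; last exact: IH.
by case/In_add_term.
Qed.

Lemma lcomb_collect (V : lmodType R) (f : T -> V) l : lcomb f (collect l) = lcomb f l.
Proof. by elim: l => [|p r IH] //=; rewrite lcomb_add_term IH. Qed.

Lemma coef_collect l t : coef (collect l) t = coef l t.
Proof. by elim: l => [|p r IH] //=; rewrite coef_add_term IH. Qed.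

Lemma NoDup_collect l : List.NoDup (map snd (collect l)).
Proof. by elim: l => [|p r IH] /=; [constructor | exact: NoDup_add_term]. Qed.

Lemma lcomb_filter_nonzero (V : lmodType R) (f : T -> V) l :
  lcomb f (filter (fun p => p.1 != 0) l) = lcomb f l.
Proof.
elim: l => [|p r IH] //=.
by case: eqP => [-> | _] /=; rewrite IH // scale0r add0r.
Qed.

Lemma lcomb_reduce (V : lmodType R) (f : T -> V) l : lcomb f (reduce l) = lcomb f l.
Proof. by rewrite lcomb_filter_nonzero lcomb_collect. Qed.

Lemma NoDup_reduce l : List.NoDup (map snd (reduce l)).
Proof.
rewrite /reduce; elim: (collect l) (NoDup_collect l) => [|p r IH] //=.
move=> /List.NoDup_cons_iff [p_notin_r Nr]; case: ifP => _ /=; last exact: IH.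
apply: List.NoDup_cons; last exact: IH.
case/List.in_map_iff => [q [qp /List.filter_In [q_in_r _]]].
by apply: p_notin_r; rewrite -qp; exact: List.in_map.
Qed.

Lemma reduce_nonzero l q : List.In q (reduce l) -> q.1 != 0.
Proof. by case/List.filter_In. Qed.

Lemma coef_filter_nonzero l t : coef (filter (fun p => p.1 != 0) l) t = coef l t.
Proof.
elim: l => [|p r IH] //=.
case: (eqVneq p.1 0) => [p0 | _] /=; rewrite IH //.
by case: (classical_eq_dec p.2 t) => ? /=; rewrite ?p0 add0r.
Qed.

Lemma coef_reduce l t : coef (reduce l) t = coef l t.
Proof. by rewrite coef_filter_nonzero coef_collect. Qed.

Lemma coef_notin l t : ~ List.In t (map snd l) -> coef l t = 0.
Proof.
elim: l => [|p r IH] //= t_notin.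
case: classical_eq_dec => [pt|?] /=; first by case: t_notin; left.
by rewrite add0r IH // => ?; apply: t_notin; right.
Qed.

Lemma coef_In l k t : List.NoDup (map snd l) -> List.In (k, t) l -> coef l t = k.
Proof.
elim: l => [|[k' s] r IH] //= /List.NoDup_cons_iff [s_notin_r Nr].
case=> [[<- <-] | kt_in_r].
  by case: classical_eq_dec => // ? /=; rewrite coef_notin ?addr0.
case: classical_eq_dec => [st|?] /=; last by rewrite add0r IH.
by case: s_notin_r; rewrite st; exact: (List.in_map snd _ _ kt_in_r).
Qed.

Lemma coef_eq0_of_independent (V : lmodType R) (f : T -> V) l :
  independent f -> lcomb f l = 0 -> forall t, coef l t = 0.
Proof.
move=> indep_f l0 t; rewrite -coef_collect.
have := indep_f _ (NoDup_collect l); rewrite lcomb_collect => /(_ l0).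
elim: (collect l) => [|p r IH] //= all0.
have -> : p.1 = 0 by apply: all0; left.
rewrite IH; last by move=> q q_in; apply: all0; right.
by case: classical_eq_dec => ? /=; rewrite addr0.
Qed.

Lemma coef_eq_of_independent (V : lmodType R) (f : T -> V) l l' :
  independent f -> lcomb f l = lcomb f l' -> forall t, coef l t = coef l' t.
Proof.
move=> indep_f eq_ll' t.
pose opp := map (fun p : R * T => (- p.1, p.2)).
have lcomb_opp m : lcomb f (opp m) = - lcomb f m.
  by elim: m => [|p r IH] /=; rewrite ?oppr0 // IH opprD scaleNr.
have coef_opp m : coef (opp m) t = - coef m t.
  elim: m => [|p r IH] /=; rewrite ?oppr0 // IH opprD.
  by case: classical_eq_dec => ? /=; rewrite ?oppr0.
have : coef (l ++ opp l') t = 0.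
  by apply: coef_eq0_of_independent indep_f _ _; rewrite lcomb_cat lcomb_opp eq_ll' subrr.
by rewrite coef_cat coef_opp => /eqP; rewrite subr_eq0 => /eqP.
Qed.

Lemma In_of_eq_coef l l' p :
  List.NoDup (map snd l) -> List.NoDup (map snd l') ->
  (forall q, List.In q l -> q.1 != 0) ->
  (forall t, coef l t = coef l' t) -> List.In p l -> List.In p l'.
Proof.
case: p => k t N N' nz_l eq_coef kt_in.
have coef_t : coef l' t = k by rewrite -eq_coef (coef_In N kt_in).
have t_in' : List.In t (map snd l').
  apply: NNPP => /coef_notin; rewrite coef_t => k0.
  by move: (nz_l _ kt_in); rewrite /= k0 eqxx.
case/List.in_map_iff: t_in' => [[k' t'] [/= t't kt'_in]]; subst t'.
by rewrite -coef_t (coef_In N' kt'_in).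
Qed.

Lemma perm_of_eq_coef l l' :
  List.NoDup (map snd l) -> List.NoDup (map snd l') ->
  (forall q, List.In q l -> q.1 != 0) -> (forall q, List.In q l' -> q.1 != 0) ->
  (forall t, coef l t = coef l' t) -> Permutation.Permutation l l'.
Proof.
move=> N N' nz_l nz_l' eq_coef.
apply: Permutation.NoDup_Permutation.
- exact: List.NoDup_map_inv N.
- exact: List.NoDup_map_inv N'.
- move=> p; split; first exact: In_of_eq_coef.
  by apply: In_of_eq_coef => // t.
Qed.

End FormalSums.

Section ChangeOfIndex.
Variables (R : comNzRingType) (T S : Type) (V : lmodType R).

Lemma lcomb_collapse (g : T -> V) (f : S -> V) :
  (forall t, g t = 0 \/ exists s, g t = f s) ->
  forall l, exists l' : seq (R * S), lcomb g l = lcomb f l'.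
Proof.
move=> g_in; elim=> [|[k t] r [l' IH]]; first by exists [::].
case: (g_in t) => [gt0 | [s gts]] /=; last by exists ((k, s) :: l'); rewrite gts IH.
by exists l'; rewrite gt0 scaler0 add0r IH.
Qed.

Lemma lcomb_map (f : T -> V) (g : S -> T) l :
  lcomb f (map (fun p : R * S => (p.1, g p.2)) l) = lcomb (fun s => f (g s)) l.
Proof. by elim: l => [|p r IH] //=; rewrite IH. Qed.

Lemma independent_comp (f : T -> V) (g : S -> T) :
  injective g -> independent f -> independent (fun s => f (g s)).
Proof.
move=> inj_g indep_f l N l0 [k s] ks_in.
pose lift (p : R * S) := (p.1, g p.2).
apply: (indep_f (map lift l) _ _ (k, g s)).
- have -> : map snd (map lift l) = map g (map snd l) by rewrite -!map_comp.
  by apply: List.NoDup_map_NoDup_ForallPairs N => x y _ _; apply: inj_g.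
- by rewrite lcomb_map.
- exact: List.in_map lift _ _ ks_in.
Qed.

End ChangeOfIndex.

Section Categories.
Variables (R : comNzRingType) (C : rcat R).
Hypothesis C_rcat : is_rcategory C.

Let comp1f X Y (f : arr C X Y) : comp (idm X) f = f := proj1 (proj1 C_rcat X Y f).
Let compA X Y Z W (f : arr C X Y) (g : arr C Y Z) (h : arr C Z W) :
  comp (comp f g) h = comp f (comp g h) := proj1 (proj2 C_rcat) X Y Z W f g h.
Let compDr X Y Z (f : arr C X Y) (g1 g2 : arr C Y Z) (k : R) :
  comp f (k *: g1 + g2) = k *: comp f g1 + comp f g2 :=
  proj1 (proj2 (proj2 C_rcat)) X Y Z f g1 g2 k.
Let compDl X Y Z (f1 f2 : arr C X Y) (g : arr C Y Z) (k : R) :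
  comp (k *: f1 + f2) g = k *: comp f1 g + comp f2 g :=
  proj2 (proj2 (proj2 C_rcat)) X Y Z f1 f2 g k.

Lemma compr0 X Y Z (f : arr C X Y) : comp f (0 : arr C Y Z) = 0.
Proof.
have E := compDr f (0 : arr C Y Z) 0 1; rewrite !scale1r addr0 in E.
by apply/(addrI (comp f 0)); rewrite addr0 -E.
Qed.

Lemma comp0r X Y Z (f : arr C Y Z) : comp (0 : arr C X Y) f = 0.
Proof.
have E := compDl (0 : arr C X Y) 0 f 1; rewrite !scale1r addr0 in E.
by apply/(addrI (comp 0 f)); rewrite addr0 -E.
Qed.

Lemma comp_lcombr X Y Z (f : arr C X Y) T (g : T -> arr C Y Z) l :
  comp f (lcomb g l) = lcomb (fun t => comp f (g t)) l.
Proof. by elim: l => [|p r IH] /=; rewrite ?compr0 // compDr IH. Qed.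

Lemma comp_lcombl X Y Z (f : arr C Y Z) T (g : T -> arr C X Y) l :
  comp (lcomb g l) f = lcomb (fun t => comp (g t) f) l.
Proof. by elim: l => [|p r IH] /=; rewrite ?comp0r // compDl IH. Qed.

Section Splitting.
Variables (G M : obj C) (i : arr C G M) (p : arr C M G) (e : arr C M M).
Hypothesis split_e : splits i p e.

Lemma splits_retract Z (g : arr C G Z) : comp i (comp p g) = g.
Proof. by rewrite -compA (proj1 split_e) comp1f. Qed.

Lemma splits_idem_l Z (g : arr C G Z) : comp e (comp p g) = comp p g.
Proof. by rewrite -(proj2 split_e) compA splits_retract. Qed.

Lemma splits_idem_r Z (g : arr C Z G) : comp (comp g i) e = comp g i.
Proof. by rewrite -(proj2 split_e) !compA -(compA i p i) (proj1 split_e) comp1f. Qed.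

Lemma splits_cancel (a b : arr C M M) : comp i a = comp i b -> comp e a = comp e b.
Proof. by rewrite -(proj2 split_e) !compA => ->. Qed.

End Splitting.

Lemma splits_corner GX GY M (iX : arr C GX M) pX eX (iY : arr C GY M) pY eY (h : arr C GX GY) :
  splits iX pX eX -> splits iY pY eY ->
  comp eX (comp pX (comp h iY)) = comp pX (comp h iY) /\
  comp (comp pX (comp h iY)) eY = comp pX (comp h iY).
Proof.
move=> split_X split_Y; split; first exact: splits_idem_l split_X _ _.
by rewrite -compA (splits_idem_r split_Y).
Qed.

End Categories.

Lemma represents_iff (R : comNzRingType) (C : rcat R) (U : obj C -> Type)
    (Umap : forall X Y, arr C X Y -> U X -> U Y) :
  concrete Umap ->
  forall GX GY M (i : arr C GX M) (j : arr C GY M) (h : arr C GX GY) (a : arr C M M),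
  (forall x, Umap _ _ j (Umap _ _ h x) = Umap _ _ a (Umap _ _ i x)) <-> comp h j = comp i a.
Proof.
move=> [_ [Ucomp Ufaithful]] GX GY M i j h a; split => [rep | eq_hi x].
  by apply: Ufaithful => x; rewrite !Ucomp.
by rewrite -!Ucomp eq_hi.
Qed.

Lemma gcomp_idl (G H : graph) (s : ghom G H) : gcomp (gid G) s = s.
Proof. by case: s => f f_hom; congr exist; apply: proof_irrelevance. Qed.

Section CornerOfA.
Variables (R : comNzRingType) (C : rcat R) (GI : Type) (gr : GI -> graph) (M : obj C).
Variable theta : forall X Y, mor gr X Y -> arr C M M.
Hypothesis C_rcat : is_rcategory C.
Hypothesis theta_comp : forall X Y Z (s : mor gr X Y) (t : mor gr Y Z),
  comp (theta s) (theta t) = theta (gcomp s t).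
Hypothesis theta_orth : forall X Y Y' Z (s : mor gr X Y) (t : mor gr Y' Z),
  Y <> Y' -> comp (theta s) (theta t) = 0.

Local Notation id_ X := (theta (gid (gr X))).

Lemma lincombE X Y (l : seq (R * mor gr X Y)) : lincomb theta l = lcomb (@theta X Y) l.
Proof. by []. Qed.

Lemma comp_id_lincomb X Y (l : seq (R * mor gr X Y)) :
  comp (id_ X) (lincomb theta l) = lincomb theta l.
Proof.
rewrite !lincombE comp_lcombr //.
by elim: l => [|p r IH] //=; rewrite IH theta_comp gcomp_idl.
Qed.

Lemma corner_thetaB X Y (b : Abasis gr) :
  comp (id_ X) (comp (thetaB theta b) (id_ Y)) = 0 \/
  exists s : mor gr X Y, comp (id_ X) (comp (thetaB theta b) (id_ Y)) = theta s.
Proof.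
have [idl _] := C_rcat.
case: b => [[[A B] s]|] /=; last first.
  rewrite (proj1 (idl _ _ _)).
  have [<-|neq_XY] := classic (X = Y); last by left; apply: theta_orth.
  by right; exists (gcomp (gid (gr X)) (gid (gr X))); apply: theta_comp.
have [eq_BY|neq_BY] := classic (B = Y); last by left; rewrite theta_orth // compr0.
subst B; rewrite theta_comp.
have [eq_XA|neq_XA] := classic (X = A); last by left; apply: theta_orth.
by subst A; right; exists (gcomp (gid (gr X)) (gcomp s (gid (gr Y)))); apply: theta_comp.
Qed.

Lemma corner_lincomb X Y (e : arr C M M) :
  (forall a : arr C M M, exists l : seq (R * Abasis gr), a = lincombB theta l) ->
  comp (id_ X) e = e -> comp e (id_ Y) = e ->
  exists l : seq (R * mor gr X Y), e = lincomb theta l.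
Proof.
move=> theta_span e_idl e_idr; have [lB e_lB] := theta_span e.
have [l corner_l] := lcomb_collapse (corner_thetaB X Y) lB.
exists l; rewrite lincombE -corner_l -comp_lcombr // -comp_lcombl //.
by rewrite -[lcomb _ lB]e_lB e_idr e_idl.
Qed.

Lemma independent_theta X Y :
  independent (thetaB theta) -> independent (@theta X Y).
Proof.
pose P (XY : GI * GI) := mor gr XY.1 XY.2.
apply: (independent_comp (g := fun s : mor gr X Y => Some (existT P (X, Y) s))).
move=> s t eq_st; apply: (@Eqdep.EqdepTheory.inj_pair2 _ P (X, Y)).
exact (congr1 (odflt (existT P (X, Y) s)) eq_st).
Qed.

End CornerOfA.

Theorem lemma3p8
  (R : comNzRingType) (K : Type) (C : rcat R)
  (U : obj C -> Type) (Umap : forall X Y, arr C X Y -> U X -> U Y)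
  (GI : Type) (gr : GI -> graph) (M : obj C)
  (theta : forall X Y, mor gr X Y -> arr C M M) (j : arr C M M -> U M) :
  preabelian C -> concrete Umap -> monos_injective Umap ->
  preserves_directed_colimits Umap ->
  uncountable_cofinality K -> skeleton K gr ->
  B1 theta -> B2 theta Umap j -> B3 theta ->
  forall (X Y : GI) (GX GY : obj C)
    (iX : arr C GX M) (pX : arr C M GX) (iY : arr C GY M) (pY : arr C M GY),
    splits iX pX (theta X X (gid (gr X))) -> splits iY pY (theta Y Y (gid (gr Y))) ->
  forall h : arr C GX GY,
  exists l : seq (R * mor gr X Y),
    [/\ List.NoDup (map snd l),
        (forall q, List.In q l -> q.1 != 0),
        (forall x : U GX, Umap _ _ iY (Umap _ _ h x) = Umap _ _ (lincomb theta l) (Umap _ _ iX x)) &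
        (forall l' : seq (R * mor gr X Y),
           List.NoDup (map snd l') -> (forall q, List.In q l' -> q.1 != 0) ->
           (forall x : U GX, Umap _ _ iY (Umap _ _ h x) = Umap _ _ (lincomb theta l') (Umap _ _ iX x)) ->
           Permutation.Permutation l l')].
Proof.
move=> [C_rcat _] U_concrete _ _ _ _ [theta_comp [theta_orth [theta_span theta_indep]]] _ _
  X Y GX GY iX pX iY pY split_X split_Y h.
set e := comp pX (comp h iY).
have h_via_e : comp h iY = comp iX e by rewrite /e (splits_retract C_rcat split_X).
have [e_idl e_idr] := splits_corner C_rcat h split_X split_Y.
have [l0 e_l0] := corner_lincomb C_rcat theta_comp theta_orth theta_span e_idl e_idr.
exists (reduce l0); split.
- exact: NoDup_reduce.
- exact: reduce_nonzero.
- by apply/represents_iff; rewrite // lincombE lcomb_reduce -lincombE -e_l0.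
move=> l' N' nz' /(represents_iff U_concrete).
rewrite h_via_e => /(splits_cancel C_rcat split_X).
rewrite e_idl comp_id_lincomb // e_l0 !lincombE.
move=> /(coef_eq_of_independent (independent_theta theta_indep)) eq_coef.
apply: perm_of_eq_coef => //; [exact: NoDup_reduce | exact: reduce_nonzero |].
by move=> t; rewrite coef_reduce.
Qed.
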